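(* Let $T$ be a first-order theory over a signature $\sigma$, and let $\dot{\mathcal{U}}$ be a unary relation symbol not in $\sigma$. For every cardinal $\kappa$ there is a TCI $\mathfrak{T}$ such that $\mathfrak{T} = (T, \sigma, \dot{\mathcal{U}}, \vartheta)$ for some $\vartheta$, and every model $\mathfrak{A} = (A; \mathcal{I})$ of $T$ with $|A| \leq \kappa$ is isomorphic to some model of $\mathfrak{T}$.
   Context: A TCI is a tuple $(T,\sigma,\dot{\mathcal U},\vartheta)$ where $T$ is a first-order theory over a signature $\sigma$, $\dot{\mathcal U}$ is a unary relation symbol not in $\sigma$, and $\vartheta$ is a function with domain $\sigma\cup\{\dot{\mathcal U}\}$ such that, writing $\vartheta(\dot{\mathcal U})=(z,a)$, every value of $\vartheta$ is $(y,0)$ or $(y,1)$ with $y\subseteq z^n$ for some $n<\omega$, and $z\cap z^n=\emptyset$ ($1<n<\omega$), $z^m\cap z^n=\emptyset$ ($1<m<n<\omega$). A structure $\mathcal M=(U;\mathcal I)$ is a model of the TCI iff its signature is $\sigma$, $\mathcal M\models T$, $U\subseteq y$ if $\vartheta(\dot{\mathcal U})=(y,0)$, $U=y$ if $\vartheta(\dot{\mathcal U})=(y,1)$, and for each $\dot X\in\sigma$ with $\vartheta(\dot X)=(y,i)$: if $\dot X$ is a constant then $\mathcal I(\dot X)\in y\cap U$; if an $n$-ary relation, $\mathcal I(\dot X)\subseteq y\cap U^n$ (equality if $i=1$); if an $n$-ary function, its graph $\{w\in U^{n+1}:\mathcal I(\dot X)(w\restriction n)=w(n)\}$ is $\subseteq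 y\cap U^{n+1}$ (equality if $i=1$). *)

From mathcomp Require Import all_boot.
Set Implicit Arguments. Unset Strict Implicit. Unset Printing Implicit Defensive.

Record signature := Signature {
  cst : Type;
  rel : Type; rar : rel -> nat;
  fn  : Type; far : fn -> nat }.

Inductive term (L : signature) : Type :=
| TVar of nat
| TCst of cst L
| TFun (f : fn L) of ('I_(far f) -> term L).

Inductive formula (L : signature) : Type :=
| FEq of term L & term L
| FRel (r : rel L) of ('I_(rar r) -> term L)
| FFalse
| FNot of formula L
| FAnd of formula L & formula L
| FOr of formula L & formula L
| FImp of formula L & formula L
| FAll of nat & formula L
| FEx of nat & formula L.

Definition theory (L : signature) := formula L -> Prop.

Record structure (L : signature) (D : Type) := Structure {
  icst : cst L -> D;
  irel : forall r : rel L, ('I_(rar r) -> D) -> Prop;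
  ifn  : forall f : fn L, ('I_(far f) -> D) -> D }.

Section Semantics.
Variables (L : signature) (D : Type) (M : structure L D).

Fixpoint eval (rho : nat -> D) (t : term L) : D :=
  match t with
  | TVar n => rho n
  | TCst c => icst M c
  | TFun f args => ifn M (fun i => eval rho (args i))
  end.

Definition upd (rho : nat -> D) (x : nat) (d : D) : nat -> D :=
  fun y => if y == x then d else rho y.

Fixpoint sat (rho : nat -> D) (phi : formula L) : Prop :=
  match phi with
  | FEq t1 t2 => eval rho t1 = eval rho t2
  | FRel r args => irel M (fun i => eval rho (args i))
  | FFalse => False
  | FNot p => ~ sat rho p
  | FAnd p q => sat rho p /\ sat rho q
  | FOr p q => sat rho p \/ sat rho q
  | FImp p q => sat rho p -> sat rho q
  | FAll x p => forall d : D, sat (upd rho x d) p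
  | FEx x p => exists d : D, sat (upd rho x d) p
  end.

Definition models (T : theory L) : Prop :=
  forall phi, T phi -> forall rho : nat -> D, sat rho phi.
End Semantics.

Definition isomorphic (L : signature) (A B : Type)
    (M : structure L A) (N : structure L B) : Prop :=
  exists h : A -> B, bijective h /\
    (forall c, h (icst M c) = icst N c) /\
    (forall r (args : 'I_(rar r) -> A), irel M args <-> irel N (h \o args)) /\
    (forall f (args : 'I_(far f) -> A), h (ifn M args) = ifn N (h \o args)).

(* |A| <= kappa, with the cardinal kappa represented by a type K *)
Definition card_le (A K : Type) : Prop := exists f : A -> K, injective f.

(* Ambient "sets" are predicates on a carrier type X; an n-tuple of elements
   of X is a sequence of length n (a 1-tuple [:: x] plays the role of x). *)
Fixpoint all_in (X : Type) (P : X -> Prop) (s : seq X) : Prop :=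
  match s with [::] => True | x :: s' => P x /\ all_in P s' end.

Definition in_pow (X : Type) (z : X -> Prop) (n : nat) (s : seq X) : Prop :=
  size s = n /\ all_in z s.

(* The function theta, with domain sigma \cup {U}.  Its value at U is a set of
   elements (z, a); its values at the symbols are sets of tuples with a flag. *)
Record tci_fun (L : signature) (X : Type) := TciFun {
  th_U   : (X -> Prop) * bool;
  th_cst : cst L -> (seq X -> Prop) * bool;
  th_rel : rel L -> (seq X -> Prop) * bool;
  th_fn  : fn L  -> (seq X -> Prop) * bool }.

Definition th_z (L : signature) (X : Type) (th : tci_fun L X) := (th_U th).1.

(* every value (y, i) of theta has y \subseteq z^n for some n.
   (The disjointness conditions z \cap z^n = \emptyset, z^m \cap z^n = \emptyset
   hold automatically in this typed encoding.) *)
Definition is_tci (L : signature) (X : Type) (th : tci_fun L X) : Prop :=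
  let z := th_z th in
  (forall c, exists n, forall s, (th_cst th c).1 s -> in_pow z n s) /\
  (forall r, exists n, forall s, (th_rel th r).1 s -> in_pow z n s) /\
  (forall f, exists n, forall s, (th_fn th f).1 s -> in_pow z n s).

Definition tup (X : Type) (U : X -> Prop) (n : nat) (w : 'I_n -> {x : X | U x})
  : seq X := [seq sval (w i) | i <- enum 'I_n].

Definition is_tci_model (L : signature) (T : theory L) (X : Type)
    (th : tci_fun L X) (U : X -> Prop) (M : structure L {x : X | U x}) : Prop :=
  models M T /\
  (if (th_U th).2 then (forall x, U x <-> (th_U th).1 x)
   else (forall x, U x -> (th_U th).1 x)) /\
  (forall c, (th_cst th c).1 [:: sval (icst M c)]) /\
  (forall r,
     (forall args : 'I_(rar r) -> {x : X | U x},
        irel M args -> (th_rel th r).1 (tup args)) /\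
     ((th_rel th r).2 -> forall s, (th_rel th r).1 s -> in_pow U (rar r) s ->
        exists args : 'I_(rar r) -> {x : X | U x}, irel M args /\ s = tup args)) /\
  (forall f,
     (forall args : 'I_(far f) -> {x : X | U x},
        (th_fn th f).1 (rcons (tup args) (sval (ifn M args)))) /\
     ((th_fn th f).2 -> forall s, (th_fn th f).1 s -> in_pow U (far f).+1 s ->
        exists args : 'I_(far f) -> {x : X | U x},
          s = rcons (tup args) (sval (ifn M args)))).

From mathcomp Require Import all_boot.
From Stdlib Require Import ClassicalEpsilon FunctionalExtensionality ProofIrrelevance.

Set Implicit Arguments.
Unset Strict Implicit.
Unset Printing Implicit Defensive.

(* Take the carrier of the TCI to be kappa itself, with universe bound
   (kappa, 0) and every symbol bounded by (kappa^n, 0): the models of this TCI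
   are exactly the models of T whose universe is a subset of kappa.  A model A
   of T with |A| <= kappa is copied along an injection A -> kappa onto its
   image, and the copy is again a model of T because satisfaction is invariant
   under isomorphism. *)

Section IsomorphismInvariance.
Variables (L : signature) (A B : Type) (M : structure L A) (N : structure L B).
Variables (h : A -> B) (g : B -> A).
Hypotheses (hK : cancel h g) (gK : cancel g h).
Hypothesis h_cst : forall c, h (icst M c) = icst N c.
Hypothesis h_rel :
  forall r (args : 'I_(rar r) -> A), irel M args <-> irel N (h \o args).
Hypothesis h_fn :
  forall f (args : 'I_(far f) -> A), h (ifn M args) = ifn N (h \o args).

Lemma eval_iso rho t : eval N (h \o rho) t = h (eval M rho t).
Proof.
elim: t => [n|c|f args IH] /=; [by [] | by rewrite h_cst |].
rewrite h_fn; congr (ifn N _); apply: functional_extensionality => i.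
by rewrite IH.
Qed.

Lemma upd_iso rho x a : upd (h \o rho) x (h a) = h \o upd rho x a.
Proof. by apply: functional_extensionality => y; rewrite /upd /=; case: (y == x). Qed.

Lemma sat_iso phi rho : sat N (h \o rho) phi <-> sat M rho phi.
Proof.
elim: phi rho => [t1 t2|r args||p IH|p IHp q IHq|p IHp q IHq|p IHp q IHq|x p IH|x p IH]
  rho /=.
- by rewrite !eval_iso; split=> [/(can_inj hK)|->].
- have -> : (fun i => eval N (h \o rho) (args i)) = h \o (fun i => eval M rho (args i)).
    by apply: functional_extensionality => i; rewrite eval_iso.
  by rewrite -h_rel.
- by [].
- by rewrite IH.
- by rewrite IHp IHq.
- by rewrite IHp IHq.
- by rewrite IHp IHq.
- split=> Hp d; first by rewrite -IH -upd_iso.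
  by rewrite -(gK d) upd_iso IH.
- split=> [[d Hd]|[a Ha]]; last by exists (h a); rewrite upd_iso IH.
  by exists (g d); rewrite -IH -upd_iso gK.
Qed.

Lemma models_iso T : models M T -> models N T.
Proof.
move=> MT phi Tphi rho.
have -> : rho = h \o (g \o rho) by apply: functional_extensionality => y /=; rewrite gK.
by apply/sat_iso/MT.
Qed.
End IsomorphismInvariance.

Lemma isomorphic_models (L : signature) (A B : Type) (M : structure L A)
    (N : structure L B) (T : theory L) :
  isomorphic M N -> models M T -> models N T.
Proof. by move=> [h [[g hK gK] [h_cst [h_rel h_fn]]]]; exact: models_iso. Qed.

Section Transport.
Variables (L : signature) (A B : Type) (h : A -> B) (g : B -> A).
Hypothesis hK : cancel h g.

Definition transport (M : structure L A) : structure L B :=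
  Structure (h \o icst M) (fun r args => irel M (g \o args))
            (fun f args => h (ifn M (g \o args))).

Lemma transport_hom n (args : 'I_n -> A) :
  g \o (h \o args) = args.
Proof. by apply: functional_extensionality => i /=; rewrite hK. Qed.

Lemma transport_isomorphic (M : structure L A) :
  cancel g h -> isomorphic M (transport M).
Proof.
move=> gK; exists h; split; first by exists g.
by split=> //; split=> ? ? /=; rewrite transport_hom.
Qed.
End Transport.

Lemma bijective_isomorphic_copy (L : signature) (A B : Type) (h : A -> B)
    (M : structure L A) :
  bijective h -> exists N : structure L B, isomorphic M N.
Proof. by case=> g hK gK; exists (transport h g M); exact: transport_isomorphic. Qed.

Section Image.
Variables (A K : Type) (f : A -> K).

Definition in_image (k : K) : Prop := exists a, f a = k.

Definition to_image (a : A) : {k | in_image k} := exist _ (f a) (ex_intro _ a erefl).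

Lemma to_image_bijective : injective f -> bijective to_image.
Proof.
move=> f_inj.
pose from_image (u : {k | in_image k}) :=
  proj1_sig (constructive_indefinite_description _ (proj2_sig u)).
have fromK u : f (from_image u) = sval u.
  by rewrite /from_image; case: constructive_indefinite_description.
exists from_image => [a|u]; first by apply: f_inj; rewrite fromK.
by apply: eq_sig_hprop => [k p q|]; [exact: proof_irrelevance | rewrite /= fromK].
Qed.
End Image.

Section FullTci.
Variables (L : signature) (X : Type).

Definition full_tci : tci_fun L X :=
  TciFun (fun _ => True, false)
    (fun _ => (fun s => size s = 1, false))
    (fun r => (fun s => size s = rar r, false))
    (fun f => (fun s => size s = (far f).+1, false)).

Lemma all_in_True (s : seq X) : all_in (fun _ => True) s.
Proof. by elim: s. Qed.

Lemma full_tci_is_tci : is_tci full_tci.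
Proof.
split; [|split] => x; [exists 1|exists (rar x)|exists (far x).+1] => s Hs;
  split=> //; exact: all_in_True.
Qed.

Lemma size_tup (U : X -> Prop) n (w : 'I_n -> {x | U x}) : size (tup w) = n.
Proof. by rewrite /tup size_map size_enum_ord. Qed.

Lemma full_tci_model (T : theory L) (U : X -> Prop) (N : structure L {x | U x}) :
  models N T -> is_tci_model T full_tci N.
Proof.
move=> NT; do 3!split=> //.
split=> x; split=> //= args; first by rewrite size_tup.
by rewrite size_rcons size_tup.
Qed.
End FullTci.

Theorem lemma5p11 (L : signature) (T : theory L) (K : Type) :
  exists (X : Type) (th : tci_fun L X), is_tci th /\
    forall (A : Type) (M : structure L A),
      models M T -> card_le A K ->
      exists (U : X -> Prop) (N : structure L {x : X | U x}),
        is_tci_model T th N /\ isomorphic M N.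
Proof.
exists K, (full_tci L K); split; first exact: full_tci_is_tci.
move=> A M MT [f f_inj].
have [N MN] := bijective_isomorphic_copy M (to_image_bijective f_inj).
exists (in_image f), N; split=> //.
exact/full_tci_model/(isomorphic_models MN).
Qed.
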